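(* Let $T \ge 2$ and let $R_0, \ldots, R_{T-1}$ be real matrices with $R_t \in \mathbb R^{q_t \times n}$, such that the row space of $R_t$ contains the row space of $R_{t+1}$ for $t = 0, \ldots, T-2$. For vectors $\sigma_{t+1|0} \in \mathbb R^{q_{t+1}}$, $t = 0, \ldots, T-2$, define $\sigma_{t|1} := (R_t')^+ R_{t+1}' \sigma_{t+1|0}$ for $t = 0,\ldots,T-2$ and $$\pi_6 := \frac14 \sum_{t=0}^{T-2} \big(|\sigma_{t+1|0}|^2 - |\sigma_{t|1}|^2\big).$$ Then $\pi_6 \ge 0$ for all $\sigma_{1|0}, \ldots, \sigma_{T-1|0}$ if and only if $\|R_{t+1} R_t^+\| \le 1$ for $t = 0, \ldots, T-2$.
   Context: For a matrix $M$, $M'$ is its transpose, $M^+$ its Moore–Penrose pseudoinverse, and $\|M\|$ its maximum singular value. $|\cdot|$ is the Euclidean norm. *)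

From HB Require Import structures.
From mathcomp Require Import all_boot all_order all_algebra.
From mathcomp Require Import boolp classical_sets reals.
Set Implicit Arguments. Unset Strict Implicit. Unset Printing Implicit Defensive.
Import Order.TTheory GRing.Theory Num.Theory.
Local Open Scope ring_scope.
Local Open Scope classical_set_scope.

Definition penrose {R : realType} {m n : nat}
  (A : 'M[R]_(m, n)) (X : 'M[R]_(n, m)) : Prop :=
  [/\ A *m X *m A = A, X *m A *m X = X,
      (A *m X)^T = A *m X & (X *m A)^T = X *m A].

Definition mpinv {R : realType} {m n : nat} (A : 'M[R]_(m, n)) : 'M[R]_(n, m) :=
  xget 0 [set X | penrose A X].

Definition sqnorm {R : realType} {k : nat} (v : 'cV[R]_k) : R :=
  \sum_(i < k) v i 0 ^+ 2.

Definition enorm {R : realType} {k : nat} (v : 'cV[R]_k) : R :=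
  Num.sqrt (sqnorm v).

(* Spectral norm ||M|| (maximum singular value) = sup_{|x| <= 1} |M x|. *)
Definition opnorm {R : realType} {m n : nat} (M : 'M[R]_(m, n)) : R :=
  sup [set enorm (M *m x) | x in [set x : 'cV[R]_n | enorm x <= 1]].

Definition sigma1 {R : realType} {n : nat} (q : nat -> nat)
  (Rm : forall t : nat, 'M[R]_(q t, n)) (s0 : forall t : nat, 'cV[R]_(q t.+1))
  (t : nat) : 'cV[R]_(q t) :=
  mpinv (Rm t)^T *m ((Rm t.+1)^T *m s0 t).

Definition pi6 {R : realType} {n : nat} (T : nat) (q : nat -> nat)
  (Rm : forall t : nat, 'M[R]_(q t, n)) (s0 : forall t : nat, 'cV[R]_(q t.+1)) : R :=
  4^-1 * \sum_(t < T.-1) (sqnorm (s0 t) - sqnorm (sigma1 Rm s0 t)).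

From HB Require Import structures.
From mathcomp Require Import all_boot all_order all_algebra.
From mathcomp Require Import boolp classical_sets reals.
From mathcomp Require Import ring lra zify.
Import Order.TTheory GRing.Theory Num.Theory.
Local Open Scope ring_scope.
Set Implicit Arguments. Unset Strict Implicit.

(* By uniqueness of the Moore--Penrose inverse, (R_t')^+ = (R_t^+)', so
   sigma_{t|1} = M_t' sigma_{t+1|0} with M_t := R_{t+1} R_t^+, and pi_6 is a
   sum of decoupled terms |s_t|^2 - |M_t' s_t|^2.  Hence pi_6 >= 0 for all
   inputs iff every M_t' is a contraction.  A matrix is a contraction iff its
   transpose is, because |M'y|^2 = <y, M M'y> <= (|y|^2 + |M M'y|^2) / 2, and
   being a contraction means ||M|| <= 1. *)

Section Pseudoinverse.
Variable R : realType.

Lemma penrose_trmx m n (A : 'M[R]_(m, n)) X : penrose A X -> penrose A^T X^T.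
Proof.
case=> AXA XAX AXsym XAsym; split.
- by rewrite -!trmx_mul mulmxA AXA.
- by rewrite -!trmx_mul mulmxA XAX.
- by rewrite -trmx_mul trmxK XAsym.
- by rewrite -trmx_mul trmxK AXsym.
Qed.

Lemma penrose_uniq m n (A : 'M[R]_(m, n)) X Y :
  penrose A X -> penrose A Y -> X = Y.
Proof.
case=> h1 h2 h3 h4 [k1 k2 k3 k4].
have eX : X = X *m A *m Y.
  have XE : X = X *m (X^T *m A^T) by rewrite -trmx_mul h3 mulmxA h2.
  have ATE : A^T = A^T *m (A *m Y)^T by rewrite -trmx_mul k1.
  by rewrite {1}XE ATE [X^T *m _]mulmxA -trmx_mul h3 k3 !mulmxA h2.
have eY : Y = X *m A *m Y.
  have YE : Y = A^T *m Y^T *m Y by rewrite -trmx_mul k4 k2.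
  have ATE : A^T = (X *m A)^T *m A^T by rewrite -trmx_mul mulmxA h1.
  rewrite {1}YE ATE -[(X *m A)^T *m A^T *m Y^T]mulmxA -trmx_mul h4 k4.
  by rewrite -!mulmxA [Y *m (A *m Y)]mulmxA k2.
by rewrite eX -eY.
Qed.

Lemma mpinv_trmx m n (A : 'M[R]_(m, n)) : mpinv A^T = (mpinv A)^T.
Proof.
have [[X AX]|noX] := pselect (exists X, penrose A X).
  have /penrose_trmx ATAT : penrose A (mpinv A).
    exact: (xgetPex 0 (P := [set X | penrose A X]) (ex_intro _ X AX)).
  by apply: xget_unique => // Y /penrose_uniq; apply.
have -> : mpinv A = 0 by apply: xgetPN => Y AY; apply: noX; exists Y.
rewrite trmx0; apply: xgetPN => Y ATY; apply: noX; exists Y^T.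
by rewrite -[A]trmxK; apply: penrose_trmx.
Qed.

End Pseudoinverse.

Section Contractions.
Variable R : realType.

Definition contraction m n (M : 'M[R]_(m, n)) : Prop :=
  forall x, sqnorm (M *m x) <= sqnorm x.

Lemma sqnorm_ge0 k (u : 'cV[R]_k) : 0 <= sqnorm u.
Proof. by apply: sumr_ge0 => i _; apply: sqr_ge0. Qed.

Lemma sqnorm0 k : sqnorm (0 : 'cV[R]_k) = 0.
Proof. by rewrite /sqnorm big1 // => i _; rewrite mxE expr0n. Qed.

Lemma sqnorm_eq0 k (x : 'cV[R]_k) : sqnorm x = 0 -> x = 0.
Proof.
move=> x0; apply/matrixP => i j; rewrite (ord1 j) mxE.
have /(_ i isT)/eqP := psumr_eq0P (fun i _ => sqr_ge0 (x i 0)) x0.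
by rewrite sqrf_eq0 => /eqP.
Qed.

Lemma sqnormZ k c (x : 'cV[R]_k) : sqnorm (c *: x) = c ^+ 2 * sqnorm x.
Proof. by rewrite /sqnorm mulr_sumr; apply: eq_bigr => i _; rewrite mxE exprMn. Qed.

Lemma sqnorm_coord k (x : 'cV[R]_k) j : x j 0 ^+ 2 <= sqnorm x.
Proof. by rewrite /sqnorm (bigD1 j) //= lerDl; apply: sumr_ge0 => i _; apply: sqr_ge0. Qed.

Lemma sqnormE k (u : 'cV[R]_k) : sqnorm u = (u^T *m u) 0 0.
Proof. by rewrite mxE; apply: eq_bigr => i _; rewrite mxE expr2. Qed.

Lemma mulmx_tr_le_sqnorm k (u v : 'cV[R]_k) :
  2 * (u^T *m v) 0 0 <= sqnorm u + sqnorm v.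
Proof.
rewrite mxE /sqnorm mulr_sumr -big_split; apply: ler_sum => i _ /=.
rewrite mxE -subr_ge0.
have -> : u i 0 ^+ 2 + v i 0 ^+ 2 - 2 * (u i 0 * v i 0) = (u i 0 - v i 0) ^+ 2.
  by ring.
exact: sqr_ge0.
Qed.

Lemma contraction_trmx m n (M : 'M[R]_(m, n)) :
  contraction M -> contraction M^T.
Proof.
move=> contrM y; set z := M^T *m y.
have zE : sqnorm z = (y^T *m (M *m z)) 0 0.
  by rewrite sqnormE {1}/z trmx_mul trmxK !mulmxA.
have := mulmx_tr_le_sqnorm y (M *m z); have := contrM z; lra.
Qed.

Lemma contraction_ball m n (M : 'M[R]_(m, n)) :
  (forall x, sqnorm x <= 1 -> sqnorm (M *m x) <= 1) -> contraction M.
Proof.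
move=> ballM x; have [/sqnorm_eq0 ->|x_neq0] := eqVneq (sqnorm x) 0.
  by rewrite mulmx0 !sqnorm0.
have x_gt0 : 0 < sqnorm x by rewrite lt_def x_neq0 sqnorm_ge0.
set c := (Num.sqrt (sqnorm x))^-1.
have c2 : c ^+ 2 = (sqnorm x)^-1 by rewrite /c exprVn sqr_sqrtr // ltW.
have := ballM (c *: x); rewrite -scalemxAr !sqnormZ c2 mulVf // lexx.
by move=> /(_ isT); rewrite mulrC ler_pdivrMr // mul1r.
Qed.

Lemma sqnorm_mulmx_bounded m n (M : 'M[R]_(m, n)) :
  exists C, forall x, sqnorm x <= 1 -> sqnorm (M *m x) <= C.
Proof.
exists (\sum_i (\sum_j `|M i j|) ^+ 2) => x x_le1.
apply: ler_sum => i _; rewrite mxE.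
have Mx_le : `|\sum_j M i j * x j 0| <= \sum_j `|M i j|.
  apply: le_trans (ler_norm_sum _ _ _) _; apply: ler_sum => j _.
  rewrite normrM -[X in _ <= X]mulr1; apply: ler_wpM2l => //.
  have := le_trans (sqnorm_coord x j) x_le1.
  rewrite -(real_normK (num_real (x j 0))) expr2.
  have := normr_ge0 (x j 0); nra.
rewrite -(real_normK (num_real (\sum_j M i j * x j 0))) !expr2.
by apply: ler_pM.
Qed.

Lemma enorm_le1 k (x : 'cV[R]_k) : (enorm x <= 1) = (sqnorm x <= 1).
Proof. by rewrite /enorm -(sqrtr1 R) ler_sqrt // sqrtr1. Qed.

Local Open Scope classical_set_scope.

Let ball_image m n (M : 'M[R]_(m, n)) :=
  [set enorm (M *m x) | x in [set x : 'cV[R]_n | enorm x <= 1]].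

Lemma ball_image_neq0 m n (M : 'M[R]_(m, n)) : ball_image M !=set0.
Proof. by exists (enorm (M *m 0)), 0; rewrite //= enorm_le1 sqnorm0. Qed.

Lemma ball_image_has_sup m n (M : 'M[R]_(m, n)) : has_sup (ball_image M).
Proof.
split; first exact: ball_image_neq0.
have [C MC] := sqnorm_mulmx_bounded M.
exists (Num.sqrt C) => _ [y /= y_le1 <-]; rewrite enorm_le1 in y_le1.
rewrite /enorm ler_sqrt ?MC //.
exact: le_trans (sqnorm_ge0 _) (MC y y_le1).
Qed.

Lemma opnorm_le1P m n (M : 'M[R]_(m, n)) : opnorm M <= 1 <-> contraction M.
Proof.
split=> [opM | contrM].
- apply: contraction_ball => x x_le1; rewrite -enorm_le1.
  apply: le_trans opM; apply: (sup_upper_bound (ball_image_has_sup M)).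
  by exists x; rewrite //= enorm_le1.
- apply: ge_sup; first exact: ball_image_neq0.
  move=> _ [y /= y_le1 <-]; rewrite enorm_le1 in y_le1.
  by rewrite enorm_le1 (le_trans (contrM y)).
Qed.

End Contractions.

Section Pi6.
Variables (R : realType) (n : nat) (q : nat -> nat).
Variable Rm : forall t : nat, 'M[R]_(q t, n).

Lemma sigma1E (s0 : forall t, 'cV[R]_(q t.+1)) t :
  sigma1 Rm s0 t = (Rm t.+1 *m mpinv (Rm t))^T *m s0 t.
Proof. by rewrite /sigma1 mpinv_trmx mulmxA -trmx_mul. Qed.

Definition single_at t (s : 'cV[R]_(q t.+1)) : forall u, 'cV[R]_(q u.+1) :=
  fun u => if t =P u is ReflectT e then ecast u 'cV[R]_(q u.+1) e s else 0.

Lemma single_at_id t (s : 'cV[R]_(q t.+1)) : single_at s t = s.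
Proof. by rewrite /single_at; case: eqP => // e; rewrite eq_axiomK. Qed.

Lemma single_at_ne t (s : 'cV[R]_(q t.+1)) u : u != t -> single_at s u = 0.
Proof.
by move=> u_neq_t; rewrite /single_at; case: eqP => // tu; rewrite tu eqxx in u_neq_t.
Qed.

Lemma pi6_single_at T t (s : 'cV[R]_(q t.+1)) : (t < T.-1)%N ->
  pi6 T Rm (single_at s) =
  4^-1 * (sqnorm s - sqnorm ((Rm t.+1 *m mpinv (Rm t))^T *m s)).
Proof.
move=> tT; rewrite /pi6 (bigD1 (Ordinal tT)) //= big1 ?addr0.
  by rewrite sigma1E single_at_id.
move=> [u uT] /= u_neq_t; have {u_neq_t} : u != t.
  by apply: contraNneq u_neq_t => ut; apply/eqP/val_inj.
by rewrite sigma1E => /single_at_ne ->; rewrite mulmx0 !sqnorm0 subrr.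
Qed.

End Pi6.

Theorem proposition3 (R : realType) (T n : nat) (q : nat -> nat)
  (Rm : forall t : nat, 'M[R]_(q t, n)) :
  (2 <= T)%N ->
  (forall t : nat, (t <= T - 2)%N -> (Rm t.+1 <= Rm t)%MS) ->
  ((forall s0 : forall t : nat, 'cV[R]_(q t.+1), 0 <= pi6 T Rm s0) <->
   (forall t : nat, (t <= T - 2)%N -> opnorm (Rm t.+1 *m mpinv (Rm t)) <= 1)).
Proof.
move=> T_ge2 _; split=> [pi6_ge0 t tT | contr s0].
- apply/opnorm_le1P; rewrite -[_ *m _]trmxK; apply: contraction_trmx => s.
  have := pi6_ge0 (single_at s); rewrite (pi6_single_at _ _ (_ : t < T.-1)%N).
    by rewrite pmulr_rge0 ?invr_gt0 // subr_ge0.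
  by lia.
- rewrite /pi6 mulr_ge0 ?invr_ge0 //; apply: sumr_ge0 => -[t tT] _.
  rewrite /= sigma1E subr_ge0; apply/contraction_trmx/opnorm_le1P/contr.
  by lia.
Qed.
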